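(* Let $A$ be a commutative Noetherian ring and $I=\langle a_1,\dots,a_n\rangle\subset A$. Let $u\in A$ be such that its image in $A/I$ is a unit, and let $v\in A$ with $uv-1\in I$. Let $r$ be an even integer with $2\le r\le n$, let $B=A/\langle a_{r+1},\dots,a_n\rangle$, and write a bar for reduction modulo $\langle a_{r+1},\dots,a_n\rangle$. Assume the unimodular row $(\bar v,\bar a_2,-\bar a_1,\dots,\bar a_r,-\bar a_{r-1})$ can be completed to an invertible matrix over $B$. Then there exists $\alpha\in M_{n\times n}(A)$ such that (1) $\det(\alpha)-u\in I$, and (2) setting $(b_1,\dots,b_n)=(a_1,\dots,a_n)\alpha$, one has $I=\langle b_1,\dots,b_n\rangle$.
   Context: A row $(c_1,\dots,c_m)$ over $B$ is completable to an invertible matrix if it is the first row of a matrix in $\mathrm{GL}_m(B)$. *)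

From HB Require Import structures.
From mathcomp Require Import all_boot all_order all_algebra.
Set Implicit Arguments.
Unset Strict Implicit.
Unset Printing Implicit Defensive.
Import GRing.Theory.
Local Open Scope ring_scope.

Definition in_ideal_gen (A : comPzRingType) (k : nat) (g : 'I_k -> A)
    (P : pred 'I_k) (x : A) : Prop :=
  exists c : 'I_k -> A, x = \sum_(i < k | P i) c i * g i.

Definition is_ideal (A : comPzRingType) (S : A -> Prop) : Prop :=
  [/\ S 0, (forall x y, S x -> S y -> S (x + y)) & (forall c x, S x -> S (c * x))].

Definition noetherian (A : comPzRingType) : Prop :=
  forall S : A -> Prop, is_ideal S ->
    exists (k : nat) (g : 'I_k -> A), forall x, S x <-> in_ideal_gen g predT x.

(* the 1-based k-th entry a_k of a row a = (a_1,...,a_n) (0 if out of range) *)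
Definition entry1 (A : comPzRingType) (n : nat) (a : 'rV[A]_n) (k : nat) : A :=
  oapp (fun i : 'I_n => a 0 i) 0 (insub k.-1).

(* the row (v, a_2, -a_1, a_4, -a_3, ..., a_r, -a_{r-1}) of length r+1 *)
Definition special_row (R : comPzRingType) (n r : nat) (v : R) (a : 'rV[R]_n)
    : 'rV[R]_r.+1 :=
  \row_(j < r.+1) (if j == 0 :> nat then v
                   else if odd j then entry1 a j.+1 else - entry1 a j.-1).

Definition completable (B : comPzRingType) (m : nat) (w : 'rV[B]_m.+1) : Prop :=
  exists M N : 'M[B]_m.+1,
    [/\ row 0 M = w, M *m N = 1%:M & N *m M = 1%:M].

From HB Require Import structures.
From mathcomp Require Import all_boot all_order all_algebra.
From mathcomp Require Import ring.
Set Implicit Arguments.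
Unset Strict Implicit.
Unset Printing Implicit Defensive.
Import GRing.Theory.
Local Open Scope ring_scope.

(* Over B, write e_i for the image of a_i and let M be a completion of (v, w)
   with w = (e_2, -e_1, ..., e_r, -e_{r-1}), Q its lower-right r x r block.
   As w . e = 0, M maps (0, e) to (0, Q e), so e = N' (Q e) for the matching
   block N' of the inverse of M: the entries of Q e generate the ideal (e).
   Since w has entries in (e), det M = v det Q mod (e), hence
   det Q = u det M mod (e); scaling one column of Q^T by the unit
   det N = (det M)^-1 gives beta with det beta = u mod (e) and (e beta) = (e).
   Any lift of beta to A, completed by the identity on the last n - r
   coordinates, is the required alpha, because the kernel of A -> B is
   generated by a_{r+1}, ..., a_n. *)

Section IdealGen.
Variables (R : comPzRingType) (m : nat) (g : 'I_m -> R) (P : pred 'I_m).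
Local Notation ideal := (in_ideal_gen g P).

Lemma ideal_gen0 : ideal 0.
Proof. by exists (fun=> 0); rewrite big1 // => i _; rewrite mul0r. Qed.

Lemma ideal_genD x y : ideal x -> ideal y -> ideal (x + y).
Proof.
case=> c -> [d ->]; exists (fun i => c i + d i); rewrite -big_split /=.
by apply: eq_bigr => i _; rewrite mulrDl.
Qed.

Lemma ideal_genMl c x : ideal x -> ideal (c * x).
Proof.
case=> d ->; exists (fun i => c * d i); rewrite mulr_sumr.
by apply: eq_bigr => i _; rewrite mulrA.
Qed.

Lemma ideal_genN x : ideal x -> ideal (- x).
Proof. by rewrite -mulN1r; apply: ideal_genMl. Qed.

Lemma ideal_genB x y : ideal x -> ideal y -> ideal (x - y).
Proof. by move=> Ix Iy; apply/ideal_genD/ideal_genN. Qed.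

Lemma ideal_gen_mem i : P i -> ideal (g i).
Proof.
move=> Pi; exists (fun j => (j == i)%:R).
rewrite (bigD1 i) //= eqxx mul1r big1 ?addr0 // => j /andP[_ /negbTE ->].
by rewrite mul0r.
Qed.

Lemma ideal_gen_sum (I : Type) (s : seq I) (Q : pred I) (F : I -> R) :
  (forall i, Q i -> ideal (F i)) -> ideal (\sum_(i <- s | Q i) F i).
Proof.
by move=> IF; apply: big_ind => //; [apply: ideal_gen0 | apply: ideal_genD].
Qed.

Lemma ideal_gen_det p (X Y : 'M[R]_p) :
  (forall i j, ideal (X i j - Y i j)) -> ideal (\det X - \det Y).
Proof.
move=> IXY; rewrite -sumrB; apply: ideal_gen_sum => s _.
rewrite -mulrBr; apply: ideal_genMl.
apply: (big_ind2 (fun x y => ideal (x - y))) => [|x1 y1 x2 y2 I1 I2|i _//].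
  by rewrite subrr; apply: ideal_gen0.
have -> : x1 * x2 - y1 * y2 = x1 * (x2 - y2) + y2 * (x1 - y1) by ring.
by apply: ideal_genD; apply: ideal_genMl.
Qed.

End IdealGen.

Lemma ideal_gen_sub (R : comPzRingType) (m m' : nat) (g : 'I_m -> R) (h : 'I_m' -> R)
    (P : pred 'I_m) (P' : pred 'I_m') x :
  (forall i, P i -> in_ideal_gen h P' (g i)) ->
  in_ideal_gen g P x -> in_ideal_gen h P' x.
Proof.
move=> gh [c ->]; apply: ideal_gen_sum => i Pi.
by apply/ideal_genMl/gh.
Qed.

Lemma ideal_gen_rmorph (R S : comPzRingType) (f : {rmorphism R -> S}) (m : nat)
    (g : 'I_m -> R) (P : pred 'I_m) x :
  in_ideal_gen g P x -> in_ideal_gen (fun i => f (g i)) P (f x).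
Proof.
case=> c ->; exists (fun i => f (c i)); rewrite rmorph_sum.
by apply: eq_bigr => i _; rewrite rmorphM.
Qed.

Notation in_row_ideal e := (in_ideal_gen (fun i => e 0%R i) predT).

Lemma in_row_ideal_mem (R : comPzRingType) (m : nat) (e : 'rV[R]_m) i :
  in_row_ideal e (e 0 i).
Proof. exact: ideal_gen_mem. Qed.

Lemma in_row_ideal_mulmx (R : comPzRingType) (m n : nat) (e : 'rV[R]_m)
    (X : 'M[R]_(m, n)) j :
  in_row_ideal e ((e *m X) 0 j).
Proof. by rewrite mxE; exists (X^~ j); apply: eq_bigr => i _; rewrite mulrC. Qed.

Lemma in_row_ideal_lsubmx (R : comPzRingType) (m n : nat) (e : 'rV[R]_(m + n)) x :
  in_row_ideal (lsubmx e) x -> in_row_ideal e x.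
Proof. by apply: ideal_gen_sub => i _; rewrite mxE; apply: in_row_ideal_mem. Qed.

Lemma in_row_ideal_rsubmx (R : comPzRingType) (m n : nat) (e : 'rV[R]_(m + n)) x :
  in_row_ideal (rsubmx e) x -> in_row_ideal e x.
Proof. by apply: ideal_gen_sub => i _; rewrite mxE; apply: in_row_ideal_mem. Qed.

Lemma in_ideal_gen_rshift (R : comPzRingType) (m n : nat) (e : 'rV[R]_(m + n)) x :
  in_ideal_gen (fun i => e 0 i) (fun i => m <= i)%N x <-> in_row_ideal (rsubmx e) x.
Proof.
split; apply: ideal_gen_sub => i; last first.
  by rewrite mxE => _; apply: ideal_gen_mem; rewrite /= leq_addr.
move=> le_m_i; have lt_i_n : (i - m < n)%N by rewrite ltn_subLR.
have -> : i = rshift m (Ordinal lt_i_n) by apply: val_inj; rewrite /= subnKC.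
by have := in_row_ideal_mem (rsubmx e) (Ordinal lt_i_n); rewrite mxE.
Qed.

Lemma map_mx_surj (A B : comPzRingType) (f : A -> B) (m n : nat) :
  (forall y, exists x, f x = y) -> forall Y : 'M[B]_(m, n), exists X, map_mx f X = Y.
Proof.
move=> f_surj Y; have f_surjb y : exists x, f x == y by have [x <-] := f_surj y; exists x.
exists (map_mx (fun y => xchoose (f_surjb y)) Y).
by apply/matrixP => i j; rewrite !mxE; apply/eqP; exact: (xchooseP (f_surjb (Y i j))).
Qed.

Lemma in_row_ideal_lift (A B : comPzRingType) (pi : {rmorphism A -> B})
    (m m' : nat) (e : 'rV[A]_m) (h : 'I_m' -> A) (P : pred 'I_m') x :
  (forall y, exists x, pi x = y) ->
  (forall y, pi y = 0 -> in_ideal_gen h P y) ->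
  (forall i, in_ideal_gen h P (e 0 i)) ->
  in_row_ideal (map_mx pi e) (pi x) -> in_ideal_gen h P x.
Proof.
move=> pi_surj ker_h e_h [c picx].
have [c' pic'] : exists c' : 'rV_m, map_mx pi c' = \row_i c i by apply: map_mx_surj.
pose s := \sum_(i < m) c' 0 i * e 0 i.
have -> : x = (x - s) + s by rewrite subrK.
apply: ideal_genD; last by apply: ideal_gen_sum => i _; apply/ideal_genMl/e_h.
apply: ker_h; rewrite rmorphB rmorph_sum picx; apply/eqP; rewrite subr_eq0; apply/eqP.
apply: eq_bigr => i _; rewrite rmorphM mxE.
by have /matrixP/(_ 0 i) := pic'; rewrite !mxE => ->.
Qed.

Lemma drsubmx_mulmx_cancel (R : pzRingType) (m1 m2 : nat) (M N : 'M[R]_(m1 + m2))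
    (E : 'cV[R]_m2) :
  N *m M = 1%:M -> ursubmx M *m E = 0 -> E = drsubmx N *m (drsubmx M *m E).
Proof.
move=> NM1 urME0.
have ME : M *m col_mx 0 E = col_mx 0 (drsubmx M *m E).
  by rewrite -{1}[M]submxK mul_block_col !mulmx0 !add0r urME0.
have : col_mx 0 E = N *m col_mx 0 (drsubmx M *m E) by rewrite -ME mulmxA NM1 mul1mx.
by rewrite -{1}[N]submxK mul_block_col !mulmx0 !add0r => /eq_col_mx[].
Qed.

Lemma det_ursubmx_congr (R : comPzRingType) (m : nat) (g : 'I_m -> R) (P : pred 'I_m)
    (m1 m2 : nat) (M : 'M[R]_(m1 + m2)) :
  (forall i j, in_ideal_gen g P (ursubmx M i j)) ->
  in_ideal_gen g P (\det M - \det (ulsubmx M) * \det (drsubmx M)).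
Proof.
move=> Iur; rewrite -(det_lblock _ (dlsubmx M)) -{1}[M]submxK.
apply: ideal_gen_det => i j.
rewrite -[i]splitK -[j]splitK.
case: (split i) => i'; case: (split j) => j' /=;
  rewrite ?block_mxEul ?block_mxEur ?block_mxEdl ?block_mxEdr ?mxE ?subrr ?subr0;
  try by apply: ideal_gen0.
by have := Iur i' j'; rewrite !mxE.
Qed.

Lemma generating_matrix_of_completion (B : comPzRingType) (r : nat) (e : 'rV[B]_r)
    (u v : B) (M N : 'M[B]_(1 + r)) :
  (0 < r)%N -> M *m N = 1%:M -> N *m M = 1%:M ->
  ulsubmx M 0 0 = v ->
  (forall j, in_row_ideal e (ursubmx M 0 j)) ->
  ursubmx M *m e^T = 0 ->
  in_row_ideal e (u * v - 1) ->
  exists beta : 'M[B]_r,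
    in_row_ideal e (\det beta - u) /\ forall j, in_row_ideal (e *m beta) (e 0 j).
Proof.
move=> r_gt0 MN1 NM1 Mv Iw we0 Iuv.
set Q := drsubmx M.
have detMN : \det M * \det N = 1 by rewrite -det_mulmx MN1 det1.
have IdetM : in_row_ideal e (\det M - v * \det Q).
  by rewrite -Mv -det_mx11; apply: det_ursubmx_congr => i j; rewrite (ord1 i).
pose i0 := Ordinal r_gt0.
pose d := \row_(i < r) (if i == i0 then \det N else 1).
exists (Q^T *m diag_mx d); split.
  have -> : \det (Q^T *m diag_mx d) = \det Q * \det N.
    rewrite det_mulmx det_tr det_diag (bigD1 i0) //= mxE eqxx big1 ?mulr1 // => i.
    by move=> /negbTE ne_i; rewrite mxE ne_i.
  have -> : \det Q * \det N - u = - (\det N * \det Q) * (u * v - 1)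
      - (\det N * u) * (\det M - v * \det Q) + u * (\det M * \det N - 1) by ring.
  by rewrite detMN subrr mulr0 addr0; apply: ideal_genB; apply: ideal_genMl.
move=> j.
have Qe i : (Q *m e^T) i 0
    = (e *m (Q^T *m diag_mx d)) 0 i * (if i == i0 then \det M else 1).
  have -> : e *m (Q^T *m diag_mx d) = (Q *m e^T)^T *m diag_mx d.
    by rewrite mulmxA trmx_mul trmxK.
  rewrite mul_mx_diag !mxE; case: eqP => _; last by rewrite !mulr1.
  by rewrite -mulrA [_ * \det M]mulrC detMN mulr1.
have -> : e 0 j = e^T j 0 by rewrite mxE.
rewrite (drsubmx_mulmx_cancel NM1 we0) mxE; apply: ideal_gen_sum => i _.
by rewrite Qe [X in _ * X]mulrC mulrA; apply/ideal_genMl/in_row_ideal_mem.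
Qed.

Lemma sum_alternating_pairs (R : comPzRingType) (E : nat -> R) (m : nat) :
  \sum_(0 <= j < m.*2) (if odd j then - E j else E j.+2) * E j.+1 = 0.
Proof.
elim: m => [|m IHm]; first by rewrite big_nil.
rewrite doubleS !big_nat_recr //= IHm add0r odd_double /=.
by rewrite mulNr mulrC subrr.
Qed.

Lemma map_special_row (R S : comPzRingType) (f : {rmorphism R -> S}) (n r : nat) (v : R)
    (a : 'rV[R]_n) :
  map_mx f (special_row r v a) = special_row r (f v) (map_mx f a).
Proof.
have fE m : f (entry1 a m) = entry1 (map_mx f a) m.
  by rewrite /entry1; case: insub => [i|] /=; rewrite ?mxE ?rmorph0.
apply/matrixP => i j; rewrite !mxE.
by case: ifP => _ //; case: ifP => _; rewrite ?rmorphN fE.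
Qed.

Section SpecialRow.
Variables (R : comPzRingType) (r k : nat) (v : R) (a : 'rV[R]_(r + k)).
Local Notation w := (rsubmx (special_row r v a : 'rV_(1 + r))).

Lemma special_row_tailE i j : w i j = if odd j then - entry1 a j else entry1 a j.+2.
Proof. by rewrite !mxE /=; case: odd. Qed.

Lemma entry1_lsubmx i (j : 'I_r) : entry1 a j.+1 = lsubmx a i j.
Proof.
rewrite mxE (ord1 i) /entry1 /=; case: insubP => [i' _ i'E | ]; last by rewrite ltn_addr.
by congr (a 0 _); apply: val_inj.
Qed.

Hypothesis r_even : ~~ odd r.

Lemma special_row_tail_ideal j : in_row_ideal (lsubmx a) (w 0 j).
Proof.
have Ientry1 m (lt_m_r : (m < r)%N) : in_row_ideal (lsubmx a) (entry1 a m.+1).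
  by rewrite (entry1_lsubmx 0 (Ordinal lt_m_r)); apply: in_row_ideal_mem.
rewrite special_row_tailE; case: ifP => odd_j.
  apply: ideal_genN; case: (nat_of_ord j) odd_j (ltn_ord j) => // m _ /ltnW.
  exact: Ientry1.
apply: Ientry1; rewrite ltn_neqAle ltn_ord andbT.
by apply: contraNneq r_even => <-; rewrite /= odd_j.
Qed.

Lemma special_row_tail_orthogonal : w *m (lsubmx a)^T = 0.
Proof.
apply/matrixP => i j; rewrite !mxE.
under eq_bigr => l _ do rewrite special_row_tailE mxE -entry1_lsubmx.
rewrite -(big_mkord xpredT
  (fun l => (if odd l then - entry1 a l else entry1 a l.+2) * entry1 a l.+1)).
have r_half : (r./2).*2 = r by rewrite -[RHS]odd_double_half (negbTE r_even).
by have := sum_alternating_pairs (entry1 a) r./2; rewrite r_half.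
Qed.

End SpecialRow.

Lemma lift_generating_matrix (A B : comPzRingType) (pi : {rmorphism A -> B}) (r k : nat)
    (a : 'rV[A]_(r + k)) (u : A) (beta : 'M[B]_r) :
  (forall y, exists x, pi x = y) ->
  (forall x, pi x = 0 -> in_row_ideal (rsubmx a) x) ->
  in_row_ideal (map_mx pi (lsubmx a)) (\det beta - pi u) ->
  (forall j, in_row_ideal (map_mx pi (lsubmx a) *m beta) (map_mx pi (lsubmx a) 0 j)) ->
  exists alpha : 'M[A]_(r + k),
    in_row_ideal a (\det alpha - u) /\
    (forall x, in_row_ideal a x <-> in_row_ideal (a *m alpha) x).
Proof.
move=> pi_surj ker_pi; have [betaA <-] := map_mx_surj pi_surj beta; move=> Idet Igen.
exists (block_mx betaA 0 0 1%:M); split.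
  rewrite det_ublock det1 mulr1; apply: (in_row_ideal_lift (e := lsubmx a)) => //.
  - by move=> y /ker_pi /in_row_ideal_rsubmx.
  - by move=> i; apply/in_row_ideal_lsubmx/in_row_ideal_mem.
  - by rewrite rmorphB /= -det_map_mx.
move=> x; split; apply: ideal_gen_sub => i _; last exact: in_row_ideal_mulmx.
have -> : a *m block_mx betaA 0 0 1%:M = row_mx (lsubmx a *m betaA) (rsubmx a).
  by rewrite -{1}[a]hsubmxK mul_row_block !mulmx0 addr0 add0r mulmx1.
set b := row_mx _ _.
have Ib2 j : in_row_ideal b (rsubmx a 0 j).
  by rewrite -(row_mxEr (lsubmx a *m betaA)); apply: in_row_ideal_mem.
rewrite -[i]splitK; case: (split i) => i' /=; last by have := Ib2 i'; rewrite mxE.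
apply: (in_row_ideal_lift (e := lsubmx b)) => //.
- by move=> y /ker_pi; apply: ideal_gen_sub => j _.
- by move=> j; apply/in_row_ideal_lsubmx/in_row_ideal_mem.
- by rewrite row_mxKl map_mxM; have := Igen i'; rewrite !mxE.
Qed.

Lemma in_row_ideal_map_lsubmx (A B : comPzRingType) (pi : {rmorphism A -> B}) (r k : nat)
    (a : 'rV[A]_(r + k)) x :
  (forall j, pi (rsubmx a 0 j) = 0) ->
  in_row_ideal a x -> in_row_ideal (lsubmx (map_mx pi a)) (pi x).
Proof.
move=> pi_a2 /(ideal_gen_rmorph pi); apply: ideal_gen_sub => i _.
rewrite -[i]splitK; case: (split i) => j /=.
  by have := in_row_ideal_mem (lsubmx (map_mx pi a)) j; rewrite !mxE.
by have := pi_a2 j; rewrite mxE => ->; apply: ideal_gen0.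
Qed.

Lemma usubmx_row0 (R : Type) (r n : nat) (M : 'M[R]_(r.+1, n)) :
  usubmx (M : 'M_(1 + r, n)) = row 0 M.
Proof.
by apply/matrixP => i j; rewrite !mxE (ord1 i); congr (M _ _); apply: val_inj.
Qed.

Theorem proposition7p4 (A : comPzRingType) (n : nat) (a : 'rV[A]_n) (u v : A)
    (r : nat)
    (B : comPzRingType) (pi : {rmorphism A -> B}) :
  noetherian A ->
  (* u is a unit modulo I = <a_1,...,a_n> *)
  (exists w : A, in_ideal_gen (fun i => a 0 i) predT (u * w - 1)) ->
  in_ideal_gen (fun i => a 0 i) predT (u * v - 1) ->
  ~~ odd r -> (2 <= r)%N -> (r <= n)%N ->
  (* B = A / <a_{r+1},...,a_n>, pi the canonical surjection *)
  (forall y : B, exists x : A, pi x = y) ->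
  (forall x : A, pi x = 0 <-> in_ideal_gen (fun i => a 0 i) (fun i => (r <= i)%N) x) ->
  completable (map_mx pi (special_row r v a)) ->
  exists alpha : 'M[A]_n,
    in_ideal_gen (fun i => a 0 i) predT (\det alpha - u) /\
    (forall x : A, in_ideal_gen (fun i => a 0 i) predT x <->
                   in_ideal_gen (fun i => (a *m alpha) 0 i) predT x).
Proof.
move=> _ _ Iuv r_even r_ge2 r_le_n pi_surj pi_ker [M [N [M_row MN1 NM1]]].
pose k := (n - r)%N; have n_eq : n = (r + k)%N by rewrite /k subnKC.
clearbody k; subst n.
have ker_pi x : pi x = 0 -> in_row_ideal (rsubmx a) x by move/pi_ker/in_ideal_gen_rshift.
rewrite map_special_row in M_row.
set e := lsubmx (map_mx pi a).
have pi_a2 j : pi (rsubmx a 0 j) = 0.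
  by apply/pi_ker/in_ideal_gen_rshift/in_row_ideal_mem.
have Iuv_B : in_row_ideal e (pi u * pi v - 1).
  by rewrite -(rmorph1 pi) -rmorphM -rmorphB; apply: in_row_ideal_map_lsubmx.
have [beta [Idet Igen]] : exists beta : 'M[B]_r,
    in_row_ideal e (\det beta - pi u) /\ forall j, in_row_ideal (e *m beta) (e 0 j).
  apply: (@generating_matrix_of_completion _ _ e _ (pi v) M N (ltnW r_ge2)) => //.
  - by rewrite /ulsubmx usubmx_row0 M_row !mxE.
  - by move=> j; rewrite /ursubmx usubmx_row0 M_row; apply: special_row_tail_ideal.
  - by rewrite /ursubmx usubmx_row0 M_row; apply: special_row_tail_orthogonal.
rewrite /e -map_lsubmx in Idet Igen.
exact: lift_generating_matrix pi_surj ker_pi Idet Igen.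
Qed.
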